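(* Let $G$ be a maximal triangle-free graph on $n$ vertices with chromatic number $k$ and maximum degree $d$, and let $v$ be a vertex of maximum degree. Let $G'$ be the subgraph of $G$ induced by $V(G)\setminus(N(v)\cup\{v\})$. Then $G'$ is a triangle-free graph on $n-d-1$ vertices with maximum degree at most $d-1$, and its chromatic number is $k-1$ or $k$.
   Context: All graphs are finite, simple and undirected. A graph is triangle-free if it has no cycle of length $3$. A maximal triangle-free (mtf) graph is a triangle-free graph such that adding any new edge between two non-adjacent vertices creates a triangle. $N(v)$ denotes the set of neighbours of $v$. *)

From mathcomp Require Import all_boot.
Set Implicit Arguments. Unset Strict Implicit. Unset Printing Implicit Defensive.

Definition simple_graph (T : finType) (e : rel T) : Prop :=
  symmetric e /\ irreflexive e.

Definition triangle_free (T : finType) (e : rel T) : Prop :=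
  forall x y z, ~ [&& e x y, e y z & e z x].

(* maximal triangle-free: triangle-free, and adding any edge between two
   distinct non-adjacent vertices creates a triangle, i.e. they have a common
   neighbour. *)
Definition maximal_triangle_free (T : finType) (e : rel T) : Prop :=
  triangle_free e /\
  forall x y, x != y -> ~~ e x y -> exists z, e x z && e z y.

Definition nbhd (T : finType) (e : rel T) (v : T) : {set T} := [set y | e v y].

Definition degree (T : finType) (e : rel T) (v : T) : nat := #|nbhd e v|.

Definition max_degree (T : finType) (e : rel T) : nat := \max_(v : T) degree e v.

Definition proper_colouring (T : finType) (e : rel T) (k : nat)
  (c : T -> 'I_k) : Prop := forall x y, e x y -> c x != c y.

Definition colourable (T : finType) (e : rel T) (k : nat) : Prop :=
  exists c : T -> 'I_k, proper_colouring e c.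

Definition chromatic_number (T : finType) (e : rel T) (k : nat) : Prop :=
  colourable e k /\ forall j, colourable e j -> k <= j.

Definition induced_vertices (T : finType) (S : {set T}) : finType :=
  {x : T | x \in S}.

Arguments induced_vertices {T} S.
Definition induced_rel (T : finType) (e : rel T) (S : {set T}) :
  rel (induced_vertices S) := fun x y => e (val x) (val y).
Arguments induced_rel {T} e S _ _.

From Stdlib Require Import Classical.
From mathcomp Require Import all_boot zify.
Set Implicit Arguments. Unset Strict Implicit. Unset Printing Implicit Defensive.

(* Removing the closed neighbourhood N[v] leaves an induced subgraph G', so
   G' is triangle-free and chi(G') <= chi(G).  By maximality every vertex x of
   G' has a common neighbour with v, which lies in N(v): x loses at least one
   neighbour, so its degree in G' is at most d - 1.  Conversely a colouring of
   G' extends to G with one new colour on N(v), an independent set since G is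
   triangle-free, and an old colour on v, which has no neighbour in G'; hence
   chi(G) <= chi(G') + 1. *)

Lemma degree_le_max_degree (T : finType) (e : rel T) x : degree e x <= max_degree e.
Proof. exact: (leq_bigmax_cond x). Qed.

Section InducedSubgraph.

Variables (T : finType) (e : rel T) (S : {set T}).

Lemma induced_rel_simple : simple_graph e -> simple_graph (induced_rel e S).
Proof. by move=> [esym eirr]; split=> [x y | x]; [exact: esym | exact: eirr]. Qed.

Lemma induced_rel_triangle_free :
  triangle_free e -> triangle_free (induced_rel e S).
Proof. by move=> etf x y z; apply: etf. Qed.

Lemma card_induced_vertices : #|{: induced_vertices S}| = #|S|.
Proof. exact: card_sig. Qed.

Lemma degree_induced_rel (x : induced_vertices S) :
  degree (induced_rel e S) x = #|nbhd e (val x) :&: S|.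
Proof.
rewrite /degree -(card_imset _ val_inj); apply: eq_card => y.
rewrite !inE; apply/imsetP/andP => [[w] | [exy yS]].
  by rewrite inE => ew ->; split; last exact: valP.
by exists (Sub y yS); rewrite ?inE.
Qed.

Lemma colourable_induced_rel k : colourable e k -> colourable (induced_rel e S) k.
Proof. by move=> [c hc]; exists (fun x => c (val x)) => x y; apply: hc. Qed.

End InducedSubgraph.

Section Colourings.

Variables (T : finType) (e : rel T).

Lemma colourable_widen j m : colourable e j -> j <= m -> colourable e m.
Proof.
move=> [c hc] hjm; exists (fun x => widen_ord hjm (c x)) => x y exy.
by apply: contra (hc x y exy) => /eqP [] h; apply/eqP/val_inj.
Qed.

Lemma colourable_gt0 j (x : T) : colourable e j -> 0 < j.
Proof. by move=> [c _]; case: (c x) => m; lia. Qed.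

Lemma chromatic_number_le_colourable k j :
  chromatic_number e k -> colourable e j -> k <= j.
Proof. by move=> [_ kmin]; apply: kmin. Qed.

Lemma chromatic_number_pred_or k :
  colourable e k -> (forall j, colourable e j -> k <= j.+1) ->
  chromatic_number e (k - 1) \/ chromatic_number e k.
Proof.
move=> colk kmin; have [colk1 | ncolk1] := classic (colourable e (k - 1)).
  by left; split=> // j /kmin; lia.
right; split=> // j colj; rewrite leqNgt; apply/negP => ltjk.
by apply: ncolk1; apply: colourable_widen colj _; lia.
Qed.

End Colourings.

Section ClosedNeighbourhood.

Variables (T : finType) (e : rel T) (v : T).
Hypothesis simple_e : simple_graph e.

Let esym : symmetric e := simple_e.1.

Definition far_from : {set T} := ~: (v |: nbhd e v).

Lemma in_far_from x : (x \in far_from) = (x != v) && ~~ e v x.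
Proof. by rewrite !inE negb_or. Qed.

Lemma card_far_from : #|far_from| = #|T| - degree e v - 1.
Proof.
have vN : v \notin nbhd e v by rewrite inE simple_e.2.
by rewrite cardsCs setCK cardsU1 vN add1n subnS -subn1.
Qed.

Lemma degree_far_from_lt x :
  maximal_triangle_free e -> x \in far_from ->
  #|nbhd e x :&: far_from| < degree e x.
Proof.
move=> [_ emax]; rewrite in_far_from => /andP [xv nvx].
have [z /andP [xz zv]] : exists z, e x z && e z v by apply: emax; rewrite // esym.
have zN : z \in nbhd e x by rewrite inE.
rewrite /degree (cardsD1 z (nbhd e x)) zN add1n ltnS subset_leq_card //.
apply/subsetP => y; rewrite !inE negb_or => /and3P [-> _ nvy]; rewrite andbT.
by apply: contraNneq nvy => ->; rewrite esym.
Qed.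

Lemma colourable_extend_far_from j :
  triangle_free e -> 0 < j -> colourable (induced_rel e far_from) j ->
  colourable e j.+1.
Proof.
move=> etf j_gt0 [c hc].
(* [v] gets colour [0], kept distinct from the new colour [j] by [0 < j]. *)
pose f x := if insub x is Some y then widen_ord (leqnSn j) (c y)
            else if x == v then Ordinal (ltn0Sn j) else ord_max.
have fS x (xS : x \in far_from) : f x = widen_ord (leqnSn j) (c (Sub x xS)).
  by rewrite /f insubT.
have fN x : x \notin far_from -> f x = if x == v then Ordinal (ltn0Sn j) else ord_max.
  by move=> xS; rewrite /f insubF //; apply/negbTE.
have f_across x y : e x y -> x \in far_from -> y \notin far_from -> f x != f y.
  move=> exy xS yS; rewrite (fS x xS) (fN y yS).
  have /andP [_ nvx] : (x != v) && ~~ e v x by rewrite -in_far_from.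
  have yv : y != v by apply: contraNneq nvx => <-; rewrite esym.
  by rewrite (negbTE yv); apply/eqP => /(congr1 val) /=; case: (c _) => m /=; lia.
exists f => x y exy.
have [xS | xS] := boolP (x \in far_from); have [yS | yS] := boolP (y \in far_from).
- rewrite (fS x xS) (fS y yS).
  by apply: contra (hc (Sub x xS) (Sub y yS) exy) => /eqP [] h; apply/eqP/val_inj.
- exact: f_across.
- by rewrite eq_sym; apply: f_across; rewrite // esym.
rewrite (fN x xS) (fN y yS); move: exy xS yS; rewrite !in_far_from !negb_and !negbK.
have [-> | xv] := eqVneq x v; have [-> | yv] := eqVneq y v => //=.
- by rewrite simple_e.2.
- by move=> *; apply/eqP => /(congr1 val) /=; lia.
- by move=> *; apply/eqP => /(congr1 val) /=; lia.
- by move=> exy vx vy; case: (etf v x y); rewrite vx exy esym.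
Qed.

End ClosedNeighbourhood.

Theorem proposition1 (T : finType) (e : rel T) (k d : nat) (v : T) :
  simple_graph e ->
  maximal_triangle_free e ->
  chromatic_number e k ->
  max_degree e = d ->
  degree e v = d ->
  d.+1 < #|T| ->
  let S := ~: (v |: nbhd e v) in
  let G' := induced_rel e S in
  [/\ simple_graph G',
      triangle_free G',
      #|{: induced_vertices S}| = #|T| - d - 1,
      (forall x, degree G' x <= d - 1) &
      (chromatic_number G' (k - 1) \/ chromatic_number G' k)].
Proof.
move=> simple_e mtf_e chi_k max_d deg_v T_big S G'.
have cardS : #|{: induced_vertices S}| = #|T| - d - 1.
  by rewrite card_induced_vertices -deg_v (card_far_from v simple_e).
have /card_gt0P [x0 _] : 0 < #|{: induced_vertices S}| by rewrite cardS; lia.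
split.
- exact: induced_rel_simple.
- exact: induced_rel_triangle_free mtf_e.1.
- exact: cardS.
- move=> x; rewrite degree_induced_rel.
  have lt_deg : #|nbhd e (val x) :&: S| < degree e (val x).
    exact: (@degree_far_from_lt T e v simple_e (val x) mtf_e (valP x)).
  have := degree_le_max_degree e (val x); rewrite max_d; lia.
apply: chromatic_number_pred_or.
  by apply: colourable_induced_rel; case: chi_k.
move=> j colj; apply: (chromatic_number_le_colourable chi_k).
exact: colourable_extend_far_from mtf_e.1 (colourable_gt0 x0 colj) colj.
Qed.
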